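(* Let $\mathcal{G}$ be a knowledge graph with finite entity set $V$ and finite relation set $\mathcal{R}$, let $r \in \mathcal{R}$, and let $E_r = \{(X_1,Y_1),\dots,(X_m,Y_m)\}$ ($m \ge 1$) be the set of edges of $\mathcal{G}$ labeled by $r$. Fix a maximum rule length $L \ge 1$ and let $\mathcal{K}$ be the (finite) set of all clauses $C_k = r_1 \wedge \cdots \wedge r_l$ with $1 \le l \le L$ and $r_1,\dots,r_l \in \mathcal{R}$. For $k \in \mathcal{K}$ and $i \in \{1,\dots,m\}$ set $a_{ik} = C_k(X_i,Y_i)$. Fix $\kappa > 0$ and consider the integer program (IPR) $$\min \sum_{i=1}^m \eta_i \quad \text{s.t.} \quad \sum_{k\in\mathcal{K}} a_{ik} w_k + \eta_i \ge 1 \ (i=1,\dots,m), \quad \sum_{k \in \mathcal{K}} (1+|C_k|)\, w_k \le \kappa, \quad w_k \in \{0,1\}\ (k \in \mathcal{K}), \quad \eta_i \ge 0\ (i=1,\dots,m).$$ Let $(\bar\eta,\bar w)$ be an optimal solution of IPR with objective value $\gamma$. Then one can construct from $(\bar\eta,\bar w)$ a scoring function $f : V \times V \to \mathbb{R}$ such that the mean reciprocal rank of $f$ on the training triples $(X_i,r,Y_i)$, $i=1,\dots,m$, computed with optimistic ranking, is at least $1 - \gamma/m$.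
   Context: A knowledge graph is a finite set of facts $(t, r, h)$ with $t \ne h \in V$ and $r \in \mathcal{R}$, viewed as a directed multigraph with an edge $t \to h$ labeled $r$ for each fact. A clause $C = r_1 \wedge \cdots \wedge r_l$ (a sequence of relations of length $|C| = l$) defines $C: V \times V \to \{0,1\}$ by $C(X,Y) = 1$ iff there exist entities $X_1,\dots,X_{l-1} \in V$ such that $X \xrightarrow{r_1} X_1 \xrightarrow{r_2} \cdots X_{l-1} \xrightarrow{r_l} Y$ is a path of labeled edges in the graph (for $l=1$: an edge $X \xrightarrow{r_1} Y$). Optimistic ranking and MRR: for a scoring function $f: V\times V \to \mathbb{R}$ and the triple $(X_i,r,Y_i)$, the right rank $rr_i$ is $1$ plus the number of entities $Z \in V$ with $f(X_i,Z) > f(X_i,Y_i)$, and the left rank $lr_i$ is $1$ plus the number of entities $Z \in V$ with $f(Z,Y_i) > f(X_i,Y_i)$. The mean reciprocal rank over the triples is $\frac{1}{2m}\left(\sum_{i=1}^m \frac{1}{rr_i} + \sum_{i=1}^m \frac{1}{lr_i}\right)$. *)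

From HB Require Import structures.
From mathcomp Require Import all_boot all_order all_algebra.
Set Implicit Arguments. Unset Strict Implicit. Unset Printing Implicit Defensive.
Import Order.TTheory GRing.Theory Num.Theory.
Local Open Scope ring_scope.

Section KG.
Variables (V Rel : finType).

Definition kg := {set V * Rel * V}.

Definition kg_wf (G : kg) : Prop :=
  forall t r h, (t, r, h) \in G -> t != h.

(* Truth of a clause r_1 /\ ... /\ r_l at (X, Y): existence of a labeled path
   X -r_1-> X_1 -r_2-> ... -r_l-> Y.  (The empty clause is never used.) *)
Fixpoint clause_holds (G : kg) (c : seq Rel) (X Y : V) : bool :=
  match c with
  | [::] => X == Y
  | r :: c' => [exists Z : V, ((X, r, Z) \in G) && clause_holds G c' Z Y]
  end.

Definition edges_of (G : kg) (r : Rel) : {set V * V} :=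
  [set p : V * V | (p.1, r, p.2) \in G].

(* The finite set K of clauses of length 1..L: index (i, t) with t a tuple of
   length i+1. *)
Definition clause_idx (L : nat) := {i : 'I_L & (i.+1).-tuple Rel}.

Definition clause_of L (k : clause_idx L) : seq Rel := tval (tagged k).

Definition clause_len L (k : clause_idx L) : nat := size (clause_of k).

Variable R : realFieldType.

Definition ipr_feasible (G : kg) (r : Rel) (L : nat) (kappa : R)
  (eta : V * V -> R) (w : clause_idx L -> bool) : Prop :=
  (forall p, p \in edges_of G r ->
     \sum_(k : clause_idx L) (clause_holds G (clause_of k) p.1 p.2 : nat)%:R
        * (w k : nat)%:R + eta p >= 1) /\
  \sum_(k : clause_idx L) (1 + clause_len k)%:R * (w k : nat)%:R <= kappa /\
  (forall p, p \in edges_of G r -> 0 <= eta p).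

Definition ipr_objective (G : kg) (r : Rel) (eta : V * V -> R) : R :=
  \sum_(p in edges_of G r) eta p.

Definition ipr_optimal (G : kg) (r : Rel) (L : nat) (kappa : R)
  (eta : V * V -> R) (w : clause_idx L -> bool) : Prop :=
  ipr_feasible G r kappa eta w /\
  forall eta' (w' : clause_idx L -> bool), ipr_feasible G r kappa eta' w' ->
    ipr_objective G r eta <= ipr_objective G r eta'.

Definition rule_score (G : kg) L (w : clause_idx L -> bool) (X Y : V) : R :=
  ([exists k, w k && clause_holds G (clause_of k) X Y] : nat)%:R.

Definition right_rank (f : V -> V -> R) (X Y : V) : nat :=
  (#|[set Z | f X Z > f X Y]|).+1.
Definition left_rank (f : V -> V -> R) (X Y : V) : nat :=
  (#|[set Z | f Z Y > f X Y]|).+1.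

Definition mrr (f : V -> V -> R) (E : {set V * V}) : R :=
  (2 * #|E|)%:R^-1 *
  (\sum_(p in E) (right_rank f p.1 p.2)%:R^-1 +
   \sum_(p in E) (left_rank f p.1 p.2)%:R^-1).

End KG.

(* On a training edge covered by a selected rule the score is maximal, so both
   optimistic ranks are 1; on an uncovered edge the covering constraint forces
   eta_i >= 1.  Either way both reciprocal ranks are at least 1 - eta_i, and
   averaging over the edges gives the bound. *)

From HB Require Import structures.
From mathcomp Require Import all_boot all_order all_algebra.
From mathcomp Require Import ring lra.
Set Implicit Arguments. Unset Strict Implicit. Unset Printing Implicit Defensive.
Import Order.TTheory GRing.Theory Num.Theory.
Local Open Scope ring_scope.

Section OptimisticRanks.
Variables (R : realFieldType) (V : finType) (f : V -> V -> R).

Lemma right_rank_max (X Y : V) :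
  (forall Z, f X Z <= f X Y) -> right_rank f X Y = 1%N.
Proof.
move=> fmax; rewrite /right_rank -[1%N]/(0.+1); congr _.+1.
by apply/eqP; rewrite cards_eq0; apply/eqP/setP => Z; rewrite !inE ltNge fmax.
Qed.

Lemma left_rank_max (X Y : V) :
  (forall Z, f Z Y <= f X Y) -> left_rank f X Y = 1%N.
Proof.
move=> fmax; rewrite /left_rank -[1%N]/(0.+1); congr _.+1.
by apply/eqP; rewrite cards_eq0; apply/eqP/setP => Z; rewrite !inE ltNge fmax.
Qed.

Lemma mrr_ge_mean (E : {set V * V}) (b : V * V -> R) :
  (forall p, p \in E -> b p <= (right_rank f p.1 p.2)%:R^-1) ->
  (forall p, p \in E -> b p <= (left_rank f p.1 p.2)%:R^-1) ->
  (\sum_(p in E) b p) / #|E|%:R <= mrr f E.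
Proof.
move=> b_le_rr b_le_lr.
rewrite /mrr natrM invfM mulrAC.
have -> : (\sum_(p in E) b p) / #|E|%:R
          = (2%:R^-1 * (\sum_(p in E) b p + \sum_(p in E) b p)) / #|E|%:R.
  by congr (_ / _); field.
apply: ler_wpM2r; first by rewrite invr_ge0 ler0n.
by apply: ler_wpM2l; [rewrite invr_ge0 ler0n | apply: lerD; exact: ler_sum].
Qed.

End OptimisticRanks.

Section RuleScore.
Variables (R : realFieldType) (V Rel : finType) (G : kg V Rel) (L : nat).
Variable w : clause_idx Rel L -> bool.

Definition covered (X Y : V) : bool :=
  [exists k, w k && clause_holds G (clause_of k) X Y].

Lemma rule_score_le1 (X Y : V) : rule_score R G w X Y <= 1.
Proof. by rewrite /rule_score; case: [exists _, _]. Qed.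

Lemma rule_score_covered (X Y : V) : covered X Y -> rule_score R G w X Y = 1.
Proof. by rewrite /rule_score /covered => ->. Qed.

Lemma ipr_feasible_uncovered (r : Rel) (kappa : R) (eta : V * V -> R) p :
  ipr_feasible G r kappa eta w -> p \in edges_of G r -> ~~ covered p.1 p.2 ->
  1 <= eta p.
Proof.
move=> [cover _] pE /existsPn uncov.
have no_rule : \sum_(k : clause_idx Rel L)
    (clause_holds G (clause_of k) p.1 p.2 : nat)%:R * (w k : nat)%:R = 0 :> R.
  apply: big1 => k _; move: (uncov k).
  by case: (w k); case: clause_holds; rewrite ?mulr0 ?mul0r.
by have := cover p pE; rewrite no_rule add0r.
Qed.

Lemma rule_score_inv_ranks_ge (r : Rel) (kappa : R) (eta : V * V -> R) p :
  ipr_feasible G r kappa eta w -> p \in edges_of G r ->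
  1 - eta p <= (right_rank (rule_score R G w) p.1 p.2)%:R^-1 /\
  1 - eta p <= (left_rank (rule_score R G w) p.1 p.2)%:R^-1.
Proof.
move=> feas pE; have eta_ge0 := feas.2.2 p pE.
have [cov | uncov] := boolP (covered p.1 p.2).
  have score1 := rule_score_covered cov.
  rewrite right_rank_max ?left_rank_max ?invr1 => [|Z|Z]; rewrite ?score1.
  - by split; lra.
  - exact: rule_score_le1.
  - exact: rule_score_le1.
have eta_ge1 := ipr_feasible_uncovered feas pE uncov.
by split; apply: (@le_trans _ _ 0); rewrite ?invr_ge0 ?ler0n //; lra.
Qed.

End RuleScore.

Theorem theorem1 (R : realFieldType) (V Rel : finType) (G : kg V Rel)
  (r : Rel) (L : nat) (kappa : R)
  (eta : V * V -> R) (w : clause_idx Rel L -> bool) (gamma : R) :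
  kg_wf G ->
  (0 < #|edges_of G r|)%N ->
  (1 <= L)%N ->
  0 < kappa ->
  ipr_optimal G r kappa eta w ->
  gamma = ipr_objective G r eta ->
  mrr (rule_score R G w) (edges_of G r) >= 1 - gamma / (#|edges_of G r|)%:R.
Proof.
move=> _ E_gt0 _ _ [feas _] ->.
apply: le_trans (mrr_ge_mean (b := fun p => 1 - eta p) _ _) => [|p pE|p pE].
- rewrite sumrB sumr_const -/(ipr_objective G r eta) mulrBl mulfV //.
  by rewrite pnatr_eq0 -lt0n.
- exact: (rule_score_inv_ranks_ge feas pE).1.
- exact: (rule_score_inv_ranks_ge feas pE).2.
Qed.
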